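(* Let $U\ge 1$ users be indexed by $n\in\{1,\dots,U\}$. Fix a duty cycle $d\in(0,1)$, a maximum transmit power $P_t>0$, a noise variance $\sigma^2>0$, and for each user $n$ a harvested energy per unit time $E_n>0$, a channel gain $g_n>0$ and a time on air $T_{a,n}>0$ (the spreading factors, hence the $T_{a,n}$, are fixed). Let $\rho_{m,n}\in[0,1]$ be correlation factors with $\rho_{n,n}=1$. Suppose the packet collision time between users $n$ and $m$ is the worst-case one, $col_{n,m}=\min(T_{a,n},T_{a,m})$, independent of the energy-harvesting times. For powers $p=(p_n)$ define $$\gamma_n=\frac{p_n g_n}{\sum_{m\neq n}\frac{col_{n,m}}{T_{a,m}}\rho_{m,n}\,p_m g_m+\sigma^2},$$ and consider the problem of maximizing $\min_{n}\log(1+\gamma_n)$ over energy-harvesting times $\tau_{e,n}$ and powers $p_n$ subject to $0\le p_n\le P_t$, $0\le p_n\le \tau_{e,n}E_n/T_{a,n}$, and $0\le \tau_{e,n}\le \frac{1-d}{d}T_{a,n}$ for all $n$. Then the optimal energy-harvesting time of each user $n$ is $$\tau_{e,n}=\delta^{(2)}_{n,max}:=\min\!\left(\frac{P_t}{E_n},\frac{1-d}{d}\right)T_{a,n},$$ which is proportional to $T_{a,n}$; i.e. choosing $\tau_{e,n}=\delta^{(2)}_{n,max}$ for all $n$ (with a suitable power allocation) attains the maximum of the problem. Moreover, with this choice the available power after harvesting, $P_{h,n}=\tau_{e,n}E_n/T_{a,n}=\min\!\left(P_t,\frac{1-d}{d}E_n\right)$, is independent of $T_{a,n}$, so the choice of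 spreading factor has no effect on the energy-harvesting constraint of each user.
   Context: Model: LoRa users transmit uplink to a gateway under a ''harvest-then-transmit'' protocol. User $n$ first harvests energy for a time $\tau_{e,n}$, obtaining energy $\tau_{e,n}E_n$, then transmits a packet of duration (time on air) $T_{a,n}$; the available power is $P_{h,n}=\tau_{e,n}E_n/T_{a,n}$. The duty-cycle restriction limits the harvesting time to at most the off time $\frac{1-d}{d}T_{a,n}$. The transmit power $p_n$ is limited both by the maximum transmit power $P_t$ and by the available harvested power. The rate of user $n$ is $\log(1+\gamma_n)$ with $\gamma_n$ the SINR defined in the claim. *)

From mathcomp Require Import all_boot all_order all_algebra.
From mathcomp Require Import all_classical all_reals all_analysis.
Set Implicit Arguments. Unset Strict Implicit. Unset Printing Implicit Defensive.
Import Order.TTheory GRing.Theory Num.Theory.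
Local Open Scope ring_scope.

Section LoRa.
Variables (R : realType) (U : nat).

Definition col (Ta : 'I_U -> R) (n m : 'I_U) : R := Num.min (Ta n) (Ta m).

Definition sinr (Ta g : 'I_U -> R) (rho : 'I_U -> 'I_U -> R) (sigma2 : R)
  (p : 'I_U -> R) (n : 'I_U) : R :=
  p n * g n /
  (\sum_(m < U | m != n) (col Ta n m / Ta m) * rho m n * p m * g m + sigma2).

Definition rate Ta g rho sigma2 p n : R := ln (1 + sinr Ta g rho sigma2 p n).

(* min over the (nonempty) set of users; i0 is any user, the min is exact *)
Definition min_rate (i0 : 'I_U) Ta g rho sigma2 p : R :=
  \big[Num.min/ rate Ta g rho sigma2 p i0]_(n < U) rate Ta g rho sigma2 p n.

Definition feasible (d Pt : R) (E Ta : 'I_U -> R) (tau p : 'I_U -> R) : Prop :=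
  forall n : 'I_U,
    [/\ 0 <= p n, p n <= Pt, p n <= tau n * E n / Ta n,
        0 <= tau n & tau n <= (1 - d) / d * Ta n].

Definition delta2max (d Pt : R) (E Ta : 'I_U -> R) (n : 'I_U) : R :=
  Num.min (Pt / E n) ((1 - d) / d) * Ta n.

End LoRa.

From Pilot Require Import Defs.
From mathcomp Require Import all_boot all_order all_algebra.
From mathcomp Require Import all_classical all_reals all_analysis.
Import Order.TTheory GRing.Theory Num.Theory.
Import numFieldNormedType.Exports.
Local Open Scope ring_scope.

(* Whatever the harvesting times, the constraints only allow powers
   0 <= p_n <= min(P_t, (1-d)/d E_n), and with tau = delta2max every power in
   this box is allowed.  The min-rate is continuous on the box, which is
   compact, so it attains its maximum there; that maximiser together with
   tau = delta2max is optimal. *)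

Definition max_power {R : realType} {U : nat} (d Pt : R) (E : 'I_U -> R)
  (n : 'I_U) : R :=
  Num.min Pt ((1 - d) / d * E n).

Section PowerBox.
Context {R : realType} {U : nat} {d Pt : R} {E Ta : 'I_U -> R}.
Hypotheses (d_gt0 : 0 < d) (d_lt1 : d < 1) (Pt_gt0 : 0 < Pt)
  (E_gt0 : forall n, 0 < E n) (Ta_gt0 : forall n, 0 < Ta n).

Lemma duty_ratio_ge0 : 0 <= (1 - d) / d.
Proof. by apply: divr_ge0; [rewrite subr_ge0|]; exact: ltW. Qed.

Lemma max_power_ge0 n : 0 <= max_power d Pt E n.
Proof.
rewrite le_min (ltW Pt_gt0) /=.
exact: mulr_ge0 duty_ratio_ge0 (ltW (E_gt0 n)).
Qed.

Lemma delta2max_power n :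
  delta2max d Pt E Ta n * E n / Ta n = max_power d Pt E n.
Proof.
have En := E_gt0 n; have Tn := Ta_gt0 n.
rewrite /delta2max /max_power mulrAC mulfK ?gt_eqF //.
rewrite minr_pMl ?ltW //; congr Num.min.
by rewrite divfK ?gt_eqF.
Qed.

Lemma feasible_power_le tau p n :
  feasible d Pt E Ta tau p -> 0 <= p n <= max_power d Pt E n.
Proof.
case/(_ n)=> p_ge0 p_lePt p_leh _ tau_le; rewrite p_ge0 le_min p_lePt /=.
apply: le_trans p_leh _; rewrite -mulrA.
have -> : (1 - d) / d * E n = (1 - d) / d * Ta n * (E n / Ta n).
  by rewrite [RHS]mulrA [RHS]mulrAC mulfK ?gt_eqF.
by rewrite ler_wpM2r // divr_ge0 // ltW.
Qed.

Lemma feasible_delta2max p :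
  (forall n, 0 <= p n <= max_power d Pt E n) ->
  feasible d Pt E Ta (delta2max d Pt E Ta) p.
Proof.
move=> p_box n; have /andP[p_ge0 p_le] := p_box n.
have Tn := ltW (Ta_gt0 n); have En := ltW (E_gt0 n).
split=> //.
- by apply: le_trans p_le _; rewrite ge_min lexx.
- by rewrite delta2max_power.
- by rewrite mulr_ge0 // le_min duty_ratio_ge0 divr_ge0 ?ltW.
- by rewrite ler_wpM2r // ge_min lexx orbT.
Qed.

End PowerBox.

Lemma continuous_bigmin (T : topologicalType) (R : realType) (I : Type)
  (s : seq I) (r : I -> T -> R) (r0 : T -> R) :
  continuous r0 -> (forall i, continuous (r i)) ->
  continuous (fun v => \big[Num.min/r0 v]_(i <- s) r i v).
Proof.
move=> r0_cont r_cont; elim: s => [|i s IHs].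
  by under eq_fun => v do rewrite big_nil.
under eq_fun => v do rewrite big_cons.
by move=> v; apply: continuous_min; [exact: r_cont | exact: IHs].
Qed.

Section MinRateContinuous.
Context {R : realType} {U : nat} (Ta g : 'I_U -> R) (rho : 'I_U -> 'I_U -> R)
  (sigma2 : R).
Hypotheses (Ta_gt0 : forall n, 0 < Ta n) (g_ge0 : forall n, 0 <= g n)
  (rho_ge0 : forall m n, 0 <= rho m n) (sigma2_gt0 : 0 < sigma2).

Lemma sinr_denom_gt0 (p : 'I_U -> R) n : (forall m, 0 <= p m) ->
  0 < \sum_(m < U | m != n) Defs.col Ta n m / Ta m * rho m n * p m * g m + sigma2.
Proof.
move=> p_ge0; rewrite ltr_wpDl // sumr_ge0 // => m _.
have Ta_ge0 := ltW (Ta_gt0 m).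
have col_ge0 : 0 <= Defs.col Ta n m by rewrite /Defs.col le_min !ltW.
by rewrite !mulr_ge0 ?invr_ge0 ?p_ge0 ?rho_ge0 ?g_ge0.
Qed.

Context {T : topologicalType} (P : T -> 'I_U -> R).
Hypotheses (P_ge0 : forall v n, 0 <= P v n)
  (P_cont : forall n, continuous (P ^~ n)).

Lemma continuous_sinr n : continuous (fun v => sinr Ta g rho sigma2 (P v) n).
Proof.
move=> v; apply: (@continuousM _ _ (fun v => P v n * g n)).
  exact: continuousM (P_cont n v) (cvg_cst _).
apply: continuousV; first by rewrite gt_eqF // sinr_denom_gt0.
apply: (@continuousD _ _ _ _ (fun=> sigma2)); last exact: cvg_cst.
apply: (continuous_big add_continuous) => m _ w.
exact: continuousM (continuousM (cvg_cst _) (P_cont m w)) (cvg_cst _).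
Qed.

Lemma continuous_rate n : continuous (fun v => rate Ta g rho sigma2 (P v) n).
Proof.
move=> v; apply: continuous_comp.
  by apply: continuousD; [exact: cvg_cst | exact: continuous_sinr].
apply: continuous_ln; rewrite ltr_pwDl // divr_ge0 ?mulr_ge0 //.
exact/ltW/sinr_denom_gt0.
Qed.

Lemma continuous_min_rate i0 :
  continuous (fun v => min_rate i0 Ta g rho sigma2 (P v)).
Proof. by apply: continuous_bigmin => *; exact: continuous_rate. Qed.

End MinRateContinuous.

Lemma min_rate_max_on_box {R : realType} {U : nat} (i0 : 'I_U)
  (Ta g : 'I_U -> R) (rho : 'I_U -> 'I_U -> R) (sigma2 : R) (pmax : 'I_U -> R) :
  (forall n, 0 < Ta n) -> (forall n, 0 <= g n) -> (forall m n, 0 <= rho m n) ->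
  0 < sigma2 -> (forall n, 0 <= pmax n) ->
  exists2 p : 'I_U -> R, (forall n, 0 <= p n <= pmax n) &
    forall p', (forall n, 0 <= p' n <= pmax n) ->
      min_rate i0 Ta g rho sigma2 p' <= min_rate i0 Ta g rho sigma2 p.
Proof.
move=> Ta_gt0 g_ge0 rho_ge0 sigma2_gt0 pmax_ge0.
(* the SINR is only continuous for nonnegative powers, so clip at 0 *)
pose P (v : 'rV[R]_U) n := Num.max 0 (v ord0 n).
have P_cont n : continuous (P ^~ n).
  by move=> v; exact: continuous_max (cvg_cst _) (@coord_continuous R 1 U ord0 n v).
pose A := [set v : 'rV[R]_U | forall n, `[0, pmax n]%classic (v ord0 n)]%classic.
have A_box v : v \in A -> forall n, 0 <= v ord0 n <= pmax n.
  by rewrite inE => vA n; have := vA n; rewrite /= in_itv.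
have P_row v : v \in A -> P v = v ord0.
  by move=> /A_box vA; apply: funext => n; have /andP[/max_idPr] := vA n.
have A_compact : compact A.
  exact: rV_compact (fun n => @segment_compact R 0 (pmax n)).
have A_nonempty : (A !=set0)%classic.
  by exists 0 => n /=; rewrite mxE in_itv /= lexx pmax_ge0.
have F_cont :
    {within A, continuous (fun v => min_rate i0 Ta g rho sigma2 (P v))}%classic.
  apply: continuous_subspaceT; apply: continuous_min_rate => // v n.
  by rewrite le_max lexx.
have [c cA c_max] := compact_EVT_max A_nonempty A_compact F_cont.
exists (c ord0); first exact: A_box.
move=> p' p'_box; have rowA : \row_n p' n \in A.
  by rewrite inE => n /=; rewrite mxE in_itv /= p'_box.
have := c_max _ rowA; rewrite !P_row //.
by have -> : (\row_n p' n) ord0 = p' by apply: funext => n; rewrite mxE.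
Qed.

Theorem corollary1 (R : realType) (U : nat) (hU : (1 <= U)%N)
  (d Pt sigma2 : R) (E g Ta : 'I_U -> R) (rho : 'I_U -> 'I_U -> R) :
  0 < d -> d < 1 -> 0 < Pt -> 0 < sigma2 ->
  (forall n, 0 < E n) -> (forall n, 0 < g n) -> (forall n, 0 < Ta n) ->
  (forall m n, 0 <= rho m n <= 1) -> (forall n, rho n n = 1) ->
  (exists p : 'I_U -> R,
     feasible d Pt E Ta (delta2max d Pt E Ta) p /\
     forall tau' p' : 'I_U -> R, feasible d Pt E Ta tau' p' ->
       min_rate (Ordinal hU) Ta g rho sigma2 p'
         <= min_rate (Ordinal hU) Ta g rho sigma2 p) /\
  (forall n, delta2max d Pt E Ta n * E n / Ta n = Num.min Pt ((1 - d) / d * E n)).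
Proof.
move=> d_gt0 d_lt1 Pt_gt0 sigma2_gt0 E_gt0 g_gt0 Ta_gt0 rho01 _.
split; last exact: delta2max_power E_gt0 Ta_gt0.
have g_ge0 n : 0 <= g n := ltW (g_gt0 n).
have rho_ge0 m n : 0 <= rho m n by case/andP: (rho01 m n).
have [p p_box p_opt] :=
  min_rate_max_on_box (Ordinal hU) Ta g rho sigma2 (max_power d Pt E)
    Ta_gt0 g_ge0 rho_ge0 sigma2_gt0 (max_power_ge0 d_gt0 d_lt1 Pt_gt0 E_gt0).
exists p; split; first exact: feasible_delta2max.
by move=> tau' p' feas; apply: p_opt => n; exact: feasible_power_le feas.
Qed.
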